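(* For any temporal feedback graph $\mathcal{S}$ on $T$ rounds, the optimal value of the upper bound dual program (maximize $\sum_{t=1}^T\mu_t$ subject to $\sum_{t\in C_c}\mu_t^2\le 1$ for all $c\in[N]$ and $\mu_t\ge 0$ for all $t\in[T]$) equals $\mathsf{UB}(\mathcal{S})$, the optimal value of the upper bound program (minimize $\sum_{c=1}^N\sqrt{\sum_{t\in C_c}\lambda_{c,t}^2}$ subject to $\sum_{c=1}^N\lambda_{c,t}=1$ for all $t\in[T]$, $\lambda_{c,t}=0$ if $t\notin C_c$, $\lambda_{c,t}\ge0$).
   Context: A temporal feedback graph $\mathcal{S}$ is a collection of subsets $S_t\subseteq[T]\setminus\{t\}$, $t\in[T]$. A sequence of rounds $t_1,\dots,t_w$ is an order if $t_u\in S_{t_v}$ for all $u<v$; it is maximal if no super-sequence of it is an order. $C_1,\dots,C_N$ denote all maximal orders of $\mathcal{S}$. *)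

From HB Require Import structures.
From mathcomp Require Import all_boot all_order all_algebra.
From mathcomp Require Import boolp classical_sets reals.
Set Implicit Arguments. Unset Strict Implicit. Unset Printing Implicit Defensive.
Import Order.TTheory GRing.Theory Num.Theory.
Local Open Scope ring_scope.
Local Open Scope classical_set_scope.

(* A temporal feedback graph on T rounds: S t is a subset of [T] \ {t}.
   Rounds are 'I_T (i.e. 0..T-1). *)
Definition tfg_wf (T : nat) (S : 'I_T -> {set 'I_T}) : Prop :=
  forall t, t \notin S t.

Definition is_order (T : nat) (S : 'I_T -> {set 'I_T}) (s : seq 'I_T) : bool :=
  pairwise (fun a b => a \in S b) s.

Definition is_maximal_order (T : nat) (S : 'I_T -> {set 'I_T}) (s : seq 'I_T) : Prop :=
  is_order S s /\ forall s', is_order S s' -> subseq s s' -> s' = s.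

(* all sequences over 'I_T of length at most T (orders have distinct entries,
   hence length <= T) *)
Definition short_seqs (T : nat) : seq (seq 'I_T) :=
  flatten [seq [seq tval tu | tu <- enum {: n.-tuple 'I_T}] | n <- iota 0 T.+1].

(* The list C_1, ..., C_N of all maximal orders (each listed once) *)
Definition max_orders (T : nat) (S : 'I_T -> {set 'I_T}) : seq (seq 'I_T) :=
  [seq s <- short_seqs T | `[< is_maximal_order S s >] ].

Definition ub_feasible (R : realType) (T : nat) (S : 'I_T -> {set 'I_T})
    (lam : seq 'I_T -> 'I_T -> R) : Prop :=
  (forall t : 'I_T, \sum_(C <- max_orders S) lam C t = 1) /\
  (forall C, C \in max_orders S -> forall t, t \notin C -> lam C t = 0) /\
  (forall C, C \in max_orders S -> forall t, 0 <= lam C t).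

Definition ub_objective (R : realType) (T : nat) (S : 'I_T -> {set 'I_T})
    (lam : seq 'I_T -> 'I_T -> R) : R :=
  \sum_(C <- max_orders S) Num.sqrt (\sum_(t <- C) lam C t ^+ 2).

Definition UB (R : realType) (T : nat) (S : 'I_T -> {set 'I_T}) : R :=
  inf [set v : R | exists lam, ub_feasible S lam /\ v = ub_objective S lam].

Definition dual_feasible (R : realType) (T : nat) (S : 'I_T -> {set 'I_T})
    (mu : 'I_T -> R) : Prop :=
  (forall C, C \in max_orders S -> \sum_(t <- C) mu t ^+ 2 <= 1) /\
  (forall t, 0 <= mu t).

Definition dual_objective (R : realType) (T : nat) (mu : 'I_T -> R) : R :=
  \sum_(t < T) mu t.

Definition dual_value (R : realType) (T : nat) (S : 'I_T -> {set 'I_T}) : R :=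
  sup [set v : R | exists mu, dual_feasible S mu /\ v = dual_objective mu].

(* Weak duality is the Cauchy-Schwarz inequality on each maximal order.
   Conversely, let V(x) be the value of the upper bound program whose covering
   constraints are relaxed to sum_C lam_{C,t} >= x_t.  By Minkowski's inequality
   V is sublinear on R^T, so the finite-dimensional Hahn-Banach theorem yields a
   linear functional mu <= V with mu(1) = V(1) >= UB.  Testing mu against -e_t
   gives mu >= 0, and testing it against mu restricted to a maximal order C,
   which C alone covers, gives sum_{t in C} mu_t^2 <= sqrt(sum_{t in C} mu_t^2);
   hence mu is dual feasible. *)

From HB Require Import structures.
From mathcomp Require Import all_boot all_order all_algebra.
From mathcomp Require Import boolp classical_sets reals.
From mathcomp Require Import lra.
Set Implicit Arguments. Unset Strict Implicit. Unset Printing Implicit Defensive.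
Import Order.TTheory GRing.Theory Num.Theory.
Local Open Scope ring_scope.
Local Open Scope classical_set_scope.

Section Sublinear.
Variables (R : realType) (V : lmodType R).
Implicit Types (p : V -> R) (v w x y : V).

Definition sublinear p :=
  (forall x y, p (x + y) <= p x + p y) /\
  (forall a x, 0 <= a -> p (a *: x) = a * p x).

Definition linear_along p w := forall x s, p (x + s *: w) = p x + p w * s.

Lemma sublinear_of_scale_le p :
  (forall x y, p (x + y) <= p x + p y) -> p 0 = 0 ->
  (forall a x, 0 < a -> p (a *: x) <= a * p x) -> sublinear p.
Proof.
move=> padd p0 pscale; split=> // a x; rewrite le_eqVlt => /predU1P [<-|a_gt0].
  by rewrite scale0r mul0r.
apply/eqP; rewrite eq_le pscale //=.
have := pscale a^-1 (a *: x); rewrite invr_gt0 scalerA mulVf ?gt_eqF // scale1r.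
by move=> /(_ a_gt0); rewrite -(ler_pM2l a_gt0) mulrA mulfV ?gt_eqF // mul1r.
Qed.

Variable p : V -> R.
Hypothesis p_sublinear : sublinear p.

Lemma sublinear0 : p 0 = 0.
Proof. by case: p_sublinear => _ pZ; rewrite -(scale0r 0) pZ ?mul0r. Qed.

Lemma sublinear_scale_ge v s : p v * s <= p (s *: v).
Proof.
case: p_sublinear => pD pZ; have [s_ge0|s_lt0] := leP 0 s.
  by rewrite pZ // mulrC.
have : p 0 <= p v + p (- v) by rewrite -(subrr v) pD.
have -> : s *: v = (- s) *: (- v) by rewrite scaleNr scalerN opprK.
rewrite sublinear0 pZ; [nra | lra].
Qed.

(* The one-dimensional step of the Hahn-Banach theorem: [linearize v] is the
   largest minorant of [p] that is linear along [v] with slope [p v]. *)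
Definition linearize v x := inf (range (fun s => p (x + s *: v) - p v * s)).

Variable v : V.

Lemma linearize_lbound x s : - p (- x) <= p (x + s *: v) - p v * s.
Proof.
case: p_sublinear => pD _.
have := pD (x + s *: v) (- x); rewrite addrAC subrr add0r.
have := sublinear_scale_ge v s; lra.
Qed.

Lemma linearize_le x s : linearize v x <= p (x + s *: v) - p v * s.
Proof.
apply: ge_inf; last by exists s.
by exists (- p (- x)) => _ [s' _ <-]; apply: linearize_lbound.
Qed.

Lemma linearize_ge x (r : R) :
  (forall s, r <= p (x + s *: v) - p v * s) -> r <= linearize v x.
Proof.
by move=> r_le; apply: lb_le_inf => [|_ [s _ <-]]; [exists (p (x + 0 *: v) - p v * 0), 0|].
Qed.

Lemma linearize_le_shift x y (c : R) :
  (forall s, exists s', p (y + s' *: v) - p v * s' <= p (x + s *: v) - p v * s + c) ->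
  linearize v y <= linearize v x + c.
Proof.
move=> shift; rewrite -lerBlDr; apply: linearize_ge => s.
have [s' le_s'] := shift s; rewrite lerBlDr; exact: le_trans (linearize_le y s') le_s'.
Qed.

Lemma linearize_le_fun x : linearize v x <= p x.
Proof. by have := linearize_le x 0; rewrite scale0r addr0 mulr0 subr0. Qed.

Lemma linearize0 : linearize v 0 = 0.
Proof.
apply/eqP; rewrite eq_le; apply/andP; split.
  by rewrite -sublinear0; apply: linearize_le_fun.
by apply: linearize_ge => s; have := linearize_lbound 0 s; rewrite oppr0 sublinear0 oppr0.
Qed.

Lemma linearize_sublinear : sublinear (linearize v).
Proof.
case: p_sublinear => pD pZ; apply: sublinear_of_scale_le; last first.
- move=> a x a_gt0; rewrite -ler_pdivrMl //; apply: linearize_ge => s.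
  rewrite ler_pdivrMl //; apply: le_trans (linearize_le (a *: x) (a * s)) _.
  by rewrite -scalerA -scalerDr pZ ?(ltW a_gt0) // mulrBr mulrCA.
- exact: linearize0.
move=> x y.
have le_sum s1 : linearize v (x + y) - (p (x + s1 *: v) - p v * s1) <= linearize v y.
  apply: linearize_ge => s2; rewrite lerBlDl.
  apply: le_trans (linearize_le (x + y) (s1 + s2)) _.
  rewrite scalerDl addrACA.
  have := pD (x + s1 *: v) (y + s2 *: v); lra.
have : linearize v (x + y) - linearize v y <= linearize v x.
  by apply: linearize_ge => s; have := le_sum s; lra.
lra.
Qed.

Lemma linearize_translate x t : linearize v (x + t *: v) = linearize v x + p v * t.
Proof.
apply/eqP; rewrite eq_le; apply/andP; split.
  apply: linearize_le_shift => s; exists (s - t).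
  by rewrite -addrA -scalerDl (addrC t) subrK; lra.
rewrite -lerBrDr; apply: linearize_le_shift => s; exists (t + s).
by rewrite scalerDl addrA; lra.
Qed.

Lemma linearize_at : linearize v v = p v.
Proof. by have := linearize_translate 0 1; rewrite add0r scale1r linearize0 add0r mulr1. Qed.

Lemma linearize_linear_along : linear_along (linearize v) v.
Proof. by move=> x s; rewrite linearize_at linearize_translate. Qed.

Lemma linearize_shift_keep w : linear_along p w ->
  forall x t, linearize v (x + t *: w) = linearize v x + p w * t.
Proof.
move=> pw x t; apply/eqP; rewrite eq_le; apply/andP; split.
  by apply: linearize_le_shift => s; exists s; rewrite addrAC pw; lra.
rewrite -lerBrDr; apply: linearize_le_shift => s; exists s.
by rewrite [x + t *: w + _]addrAC pw; lra.
Qed.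

Lemma linearize_keep_at w : linear_along p w -> linearize v w = p w.
Proof.
move=> pw; have := linearize_shift_keep pw 0 1.
by rewrite add0r scale1r linearize0 add0r mulr1.
Qed.

Lemma linearize_linear_along_keep w : linear_along p w -> linear_along (linearize v) w.
Proof. by move=> pw x t; rewrite (linearize_keep_at pw) linearize_shift_keep. Qed.

End Sublinear.

Section Subgradient.
Variable R : realType.

Lemma sublinear_linearize_seq (V : lmodType R) (p : V -> R) (u : V) (ws : seq V) :
  sublinear p -> exists q : V -> R,
  [/\ sublinear q, forall x, q x <= p x, q u = p u &
      {in u :: ws, forall w, linear_along q w}].
Proof.
move=> p_sub; elim: ws => [|w ws [q [q_sub le_qp qu q_lin]]].
  exists (linearize p u); split.
  - exact: linearize_sublinear.
  - exact: linearize_le_fun.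
  - exact: linearize_at.
  - by move=> w; rewrite inE => /eqP ->; apply: linearize_linear_along.
have q_lin_u := q_lin u (mem_head _ _).
exists (linearize q w); split.
- exact: linearize_sublinear.
- by move=> x; apply: le_trans (linearize_le_fun q_sub w x) (le_qp x).
- by rewrite linearize_keep_at.
move=> w'; rewrite !inE => /or3P [/eqP -> | /eqP -> | w'_ws].
- exact: linearize_linear_along_keep.
- exact: linearize_linear_along.
- by apply: linearize_linear_along_keep => //; apply: q_lin; rewrite inE w'_ws orbT.
Qed.

Lemma linear_along_sum (V : lmodType R) (q : V -> R) (I : eqType) (r : seq I)
    (e : I -> V) (c : I -> R) :
  sublinear q -> {in r, forall i, linear_along q (e i)} ->
  q (\sum_(i <- r) c i *: e i) = \sum_(i <- r) c i * q (e i).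
Proof.
move=> q_sub.
suff shift y : {in r, forall i, linear_along q (e i)} ->
    q (y + \sum_(i <- r) c i *: e i) = q y + \sum_(i <- r) c i * q (e i).
  by move=> /(shift 0); rewrite !add0r sublinear0 // add0r.
elim: r y => [|i r IH] y q_lin; first by rewrite !big_nil !addr0.
rewrite !big_cons addrCA addrC q_lin ?mem_head // IH => [|j j_r]; last first.
  by apply: q_lin; rewrite inE j_r orbT.
by rewrite mulrC addrAC addrA.
Qed.

Lemma sublinear_subgradient n (p : 'rV[R]_n -> R) (u : 'rV[R]_n) : sublinear p ->
  exists mu : 'I_n -> R,
    (forall x : 'rV_n, \sum_i mu i * x 0 i <= p x) /\ \sum_i mu i * u 0 i = p u.
Proof.
move=> p_sub.
have [q [q_sub le_qp qu q_lin]] :=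
  sublinear_linearize_seq u [seq 'e_i | i <- enum 'I_n] p_sub.
have q_sum x : q x = \sum_i q 'e_i * x 0 i.
  rewrite [in LHS](row_sum_delta x) linear_along_sum // => [|i _].
    by apply: eq_bigr => i _; rewrite mulrC.
  by apply: q_lin; rewrite inE map_f ?mem_enum ?orbT.
by exists (fun i => q 'e_i); split => [x|]; rewrite -q_sum.
Qed.

End Subgradient.

Section SquareSums.
Variables (R : rcfType) (I : eqType) (r : seq I).
Implicit Types f g : I -> R.

Lemma sum_sqr_ge0 f : 0 <= \sum_(i <- r) f i ^+ 2.
Proof. by apply: sumr_ge0 => i _; apply: sqr_ge0. Qed.

Lemma sum_sqr_eq0_mul f g : \sum_(i <- r) f i ^+ 2 = 0 -> \sum_(i <- r) f i * g i = 0.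
Proof.
move/eqP; rewrite psumr_eq0 => [/allP f0|i _]; last exact: sqr_ge0.
rewrite big_seq big1 // => i /f0 /=; rewrite sqrf_eq0 => /eqP ->; exact: mul0r.
Qed.

Lemma cauchy_schwarz f g :
  \sum_(i <- r) f i * g i <=
  Num.sqrt (\sum_(i <- r) f i ^+ 2) * Num.sqrt (\sum_(i <- r) g i ^+ 2).
Proof.
set A := \sum_(i <- r) f i ^+ 2; set B := \sum_(i <- r) g i ^+ 2.
have [A0|A_neq0] := eqVneq A 0.
  by rewrite sum_sqr_eq0_mul // mulr_ge0 ?sqrtr_ge0.
have [B0|B_neq0] := eqVneq B 0.
  rewrite (eq_bigr (fun i => g i * f i)) => [|i _]; last exact: mulrC.
  by rewrite sum_sqr_eq0_mul // mulr_ge0 ?sqrtr_ge0.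
have a_gt0 : 0 < Num.sqrt A by rewrite sqrtr_gt0 lt_def A_neq0 sum_sqr_ge0.
have b_gt0 : 0 < Num.sqrt B by rewrite sqrtr_gt0 lt_def B_neq0 sum_sqr_ge0.
set a := Num.sqrt A in a_gt0 *; set b := Num.sqrt B in b_gt0 *.
have aA : a ^+ 2 = A by rewrite sqr_sqrtr ?sum_sqr_ge0.
have bB : b ^+ 2 = B by rewrite sqr_sqrtr ?sum_sqr_ge0.
(* termwise AM-GM: [2 a b f g <= b^2 f^2 + a^2 g^2] *)
have amgm : 2 * a * b * \sum_(i <- r) f i * g i <= b ^+ 2 * A + a ^+ 2 * B.
  rewrite /A /B !mulr_sumr -big_split /=; apply: ler_sum => i _.
  have := sqr_ge0 (f i * b - g i * a); nra.
have ab_gt0 : 0 < a * b by rewrite mulr_gt0.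
rewrite -aA -bB in amgm; nra.
Qed.

Lemma minkowski f g :
  Num.sqrt (\sum_(i <- r) (f i + g i) ^+ 2) <=
  Num.sqrt (\sum_(i <- r) f i ^+ 2) + Num.sqrt (\sum_(i <- r) g i ^+ 2).
Proof.
set a := Num.sqrt (\sum_(i <- r) f i ^+ 2); set b := Num.sqrt (\sum_(i <- r) g i ^+ 2).
have ab_ge0 : 0 <= a + b by rewrite addr_ge0 ?sqrtr_ge0.
rewrite -(ger0_norm ab_ge0) -sqrtr_sqr; apply: ler_wsqrtr.
have aA : a ^+ 2 = \sum_(i <- r) f i ^+ 2 by rewrite sqr_sqrtr ?sum_sqr_ge0.
have bB : b ^+ 2 = \sum_(i <- r) g i ^+ 2 by rewrite sqr_sqrtr ?sum_sqr_ge0.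
have := cauchy_schwarz f g; rewrite -/a -/b => cs.
rewrite (eq_bigr (fun i => f i ^+ 2 + (2 * (f i * g i) + g i ^+ 2))); last first.
  by move=> i _; rewrite sqrrD -addrA -mulr_natl.
rewrite !big_split /= -mulr_sumr -aA -bB; nra.
Qed.

End SquareSums.

Lemma le_sqrtr_le1 (R : rcfType) (x : R) : 0 <= x -> x <= Num.sqrt x -> x <= 1.
Proof.
move=> x_ge0; have := sqr_sqrtr x_ge0; have := sqrtr_ge0 x.
set q := Num.sqrt x => q_ge0 qx x_le_q.
have q_le1 : q <= 1 by nra.
lra.
Qed.

Lemma sumr_uniq_support (V : nmodType) (I : finType) (r : seq I) (F : I -> V) :
  uniq r -> (forall i, i \notin r -> F i = 0) -> \sum_i F i = \sum_(i <- r) F i.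
Proof.
move=> r_uniq F0; rewrite [RHS]big_uniq // [RHS]big_mkcond; apply: eq_bigr => i _.
by case: ifPn => // /F0.
Qed.

Section MaximalOrders.
Variables (T : nat) (S : 'I_T -> {set 'I_T}).
Local Open Scope nat_scope.

Lemma uniq_flatten_tuples m k :
  uniq (flatten [seq [seq tval tu | tu <- enum {: n.-tuple 'I_T}] | n <- iota m k]).
Proof.
elim: k m => [|k IH] m //=; rewrite cat_uniq IH andbT.
rewrite map_inj_uniq ?enum_uniq /=; last exact: val_inj.
apply/hasPn => s /flattenP [l /mapP [n n_in ->] /mapP [tu _ ->]].
apply/negP => /mapP [tu' _ tu_tu'].
have := size_tuple tu; rewrite tu_tu' size_tuple => m_n.
by move: n_in; rewrite mem_iota m_n ltnn.
Qed.

Lemma max_orders_uniq : uniq (max_orders S).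
Proof. exact/filter_uniq/uniq_flatten_tuples. Qed.

Lemma mem_short_seqs (s : seq 'I_T) : size s <= T -> s \in short_seqs T.
Proof.
move=> s_le; apply/flattenP.
exists [seq tval tu | tu <- enum {: (size s).-tuple 'I_T}].
  by apply/mapP; exists (size s); rewrite ?mem_iota ?add0n ?ltnS.
by apply/mapP; exists (in_tuple s); rewrite ?mem_enum.
Qed.

Lemma max_orders_maximal C : C \in max_orders S -> is_maximal_order S C.
Proof. by rewrite mem_filter => /andP [/asboolP]. Qed.

Hypothesis S_wf : tfg_wf S.

Lemma order_uniq s : is_order S s -> uniq s.
Proof. by apply: pairwise_uniq => t; apply/negbTE/S_wf. Qed.

Lemma max_order_uniq C : C \in max_orders S -> uniq C.
Proof. by move=> /max_orders_maximal [/order_uniq]. Qed.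

Lemma order_size s : is_order S s -> size s <= T.
Proof.
move=> /order_uniq s_uniq; rewrite -[X in _ <= X](size_enum_ord T).
by apply: uniq_leq_size => // t _; rewrite mem_enum.
Qed.

(* A longest order through [t] is maximal. *)
Lemma max_orders_cover t : exists2 C, C \in max_orders S & t \in C.
Proof.
pose P n := `[< exists s, [/\ is_order S s, t \in s & size s = n] >].
have P1 : exists n, P n by exists 1; apply/asboolP; exists [:: t]; rewrite inE.
have P_le n : P n -> n <= T by move=> /asboolP [s [/order_size + _ <-]].
case: (ex_maxnP P1 P_le) => n /asboolP [s [s_ord t_s s_size]] s_longest.
have s_max : is_maximal_order S s.
  split=> // s' s'_ord s_s'.
  have s'_le : size s' <= n.
    by apply: s_longest; apply/asboolP; exists s'; rewrite (mem_subseq s_s').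
  apply/esym/eqP; have [_ <-] := size_subseq_leqif s_s'.
  by rewrite eqn_leq (size_subseq s_s') s_size s'_le.
exists s => //; rewrite mem_filter mem_short_seqs ?order_size // andbT.
exact/asboolP.
Qed.

End MaximalOrders.

Section Duality.
Variables (R : realType) (T : nat) (S : 'I_T -> {set 'I_T}).
Hypothesis S_wf : tfg_wf S.
Local Notation M := (max_orders S).
Implicit Types (x y : 'rV[R]_T) (lam : seq 'I_T -> 'I_T -> R) (mu : 'I_T -> R).

Definition covers x lam : Prop :=
  [/\ forall C, C \in M -> forall t, t \notin C -> lam C t = 0,
      forall C, C \in M -> forall t, 0 <= lam C t
    & forall t, x 0 t <= \sum_(C <- M) lam C t].

Definition cover_value x : R :=
  inf [set v | exists lam, covers x lam /\ v = ub_objective S lam].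

Lemma ub_objective_ge0 lam : 0 <= ub_objective S lam.
Proof. by apply: sumr_ge0 => C _; apply: sqrtr_ge0. Qed.

Lemma ub_objective0 : ub_objective S (fun _ _ => 0) = 0 :> R.
Proof.
by rewrite /ub_objective big1 // => C _; rewrite big1 ?sqrtr0 // => t _; rewrite expr0n.
Qed.

Lemma ub_objective_add lam1 lam2 :
  ub_objective S (fun C t => lam1 C t + lam2 C t) <=
  ub_objective S lam1 + ub_objective S lam2.
Proof. by rewrite /ub_objective -big_split; apply: ler_sum => C _; apply: minkowski. Qed.

Lemma ub_objective_scale (a : R) lam : 0 <= a ->
  ub_objective S (fun C t => a * lam C t) = a * ub_objective S lam.
Proof.
move=> a_ge0; rewrite /ub_objective mulr_sumr; apply: eq_bigr => C _.
under eq_bigr do rewrite exprMn.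
by rewrite -mulr_sumr sqrtrM ?sqr_ge0 // sqrtr_sqr ger0_norm.
Qed.

Lemma covers_exists x : exists lam, covers x lam.
Proof.
exists (fun C t => if t \in C then `|x 0 t| else 0); split.
- by move=> C _ t /negbTE ->.
- by move=> C _ t; case: ifP.
move=> t; have [C CM tC] := max_orders_cover S_wf t.
rewrite (big_rem C CM) /= tC; apply: le_trans (ler_norm (x 0 t)) _.
by rewrite lerDl sumr_ge0 // => C' _; case: ifP.
Qed.

Lemma cover_value_le x lam : covers x lam -> cover_value x <= ub_objective S lam.
Proof.
move=> x_lam; apply: ge_inf; last by exists lam.
by exists 0 => _ [lam' [_ ->]]; apply: ub_objective_ge0.
Qed.

Lemma cover_value_ge x (r : R) :
  (forall lam, covers x lam -> r <= ub_objective S lam) -> r <= cover_value x.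
Proof.
move=> r_le; have [lam x_lam] := covers_exists x.
apply: lb_le_inf => [|_ [lam' [x_lam' ->]]]; last exact: r_le.
by exists (ub_objective S lam), lam.
Qed.

Lemma cover_value_nonpos x : (forall t, x 0 t <= 0) -> cover_value x = 0.
Proof.
move=> x_le0; apply/eqP; rewrite eq_le; apply/andP; split.
  by rewrite -ub_objective0 cover_value_le //; split=> // t; rewrite big1.
by apply: cover_value_ge => lam _; apply: ub_objective_ge0.
Qed.

Lemma covers_add x y lam1 lam2 : covers x lam1 -> covers y lam2 ->
  covers (x + y) (fun C t => lam1 C t + lam2 C t).
Proof.
case=> [lam1_0 lam1_ge0 x_le] [lam2_0 lam2_ge0 y_le]; split.
- by move=> C CM t tC; rewrite lam1_0 ?lam2_0 ?addr0.
- by move=> C CM t; rewrite addr_ge0 ?lam1_ge0 ?lam2_ge0.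
- by move=> t; rewrite big_split mxE lerD.
Qed.

Lemma covers_scale (a : R) x lam : 0 < a -> covers x lam ->
  covers (a *: x) (fun C t => a * lam C t).
Proof.
move=> a_gt0 [lam_0 lam_ge0 x_le]; split.
- by move=> C CM t tC; rewrite lam_0 ?mulr0.
- by move=> C CM t; rewrite mulr_ge0 ?lam_ge0 ?(ltW a_gt0).
- by move=> t; rewrite mxE -mulr_sumr ler_pM2l.
Qed.

Lemma cover_value_sublinear : sublinear cover_value.
Proof.
apply: sublinear_of_scale_le => [x y||a x a_gt0].
- have le_sum lam1 : covers x lam1 ->
      cover_value (x + y) - ub_objective S lam1 <= cover_value y.
    move=> x_lam1; apply: cover_value_ge => lam2 y_lam2; rewrite lerBlDl.
    apply: le_trans (cover_value_le (covers_add x_lam1 y_lam2)) _.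
    exact: ub_objective_add.
  have : cover_value (x + y) - cover_value y <= cover_value x.
    by apply: cover_value_ge => lam x_lam; have := le_sum lam x_lam; lra.
  lra.
- by apply: cover_value_nonpos => t; rewrite mxE.
- rewrite -ler_pdivrMl //; apply: cover_value_ge => lam x_lam.
  rewrite ler_pdivrMl // -ub_objective_scale ?(ltW a_gt0) //.
  exact: cover_value_le (covers_scale a_gt0 x_lam).
Qed.

Lemma cover_value_le_order C x : C \in M ->
  (forall t, t \notin C -> x 0 t = 0) -> (forall t, 0 <= x 0 t) ->
  cover_value x <= Num.sqrt (\sum_(t <- C) x 0 t ^+ 2).
Proof.
move=> CM x_0 x_ge0.
pose lam C' t := if C' == C then x 0 t else 0.
have x_lam : covers x lam.
  split=> [C' _ t tC'|C' _ t|t]; rewrite /lam.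
  - by case: eqP => // C'C; rewrite x_0 // -C'C.
  - by case: eqP.
  - rewrite (bigD1_seq C) ?max_orders_uniq //= eqxx lerDl.
    by apply: sumr_ge0 => C' _; case: eqP.
apply: le_trans (cover_value_le x_lam) _.
rewrite /ub_objective (bigD1_seq C) ?max_orders_uniq //= [X in _ + X]big1 ?addr0.
  by rewrite /lam eqxx.
move=> C' /negbTE C'C.
by rewrite /lam C'C big1 ?sqrtr0 // => t _; rewrite expr0n.
Qed.

Lemma dual_objective_le mu lam : dual_feasible S mu -> ub_feasible S lam ->
  dual_objective mu <= ub_objective S lam.
Proof.
case=> mu_le1 mu_ge0 [lam_sum1 [lam_0 lam_ge0]].
have -> : dual_objective mu = \sum_(C <- M) \sum_t mu t * lam C t.
  rewrite exchange_big; apply: eq_bigr => t _.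
  by rewrite -mulr_sumr lam_sum1 mulr1.
rewrite /ub_objective big_seq [X in _ <= X]big_seq; apply: ler_sum => C CM.
rewrite (sumr_uniq_support (max_order_uniq S_wf CM)) => [|t tC]; last first.
  by rewrite lam_0 ?mulr0.
apply: le_trans (cauchy_schwarz _ _ _) _; rewrite ler_piMl ?sqrtr_ge0 //.
by rewrite -sqrtr1 ler_wsqrtr ?mu_le1.
Qed.

Lemma ub_feasible_of_covers lam : covers (const_mx 1) lam ->
  exists2 lam', ub_feasible S lam' & ub_objective S lam' <= ub_objective S lam.
Proof.
case=> lam_0 lam_ge0 lam_ge1.
pose s t := \sum_(C <- M) lam C t.
have s_ge1 t : 1 <= s t by have := lam_ge1 t; rewrite mxE.
have s_gt0 t : 0 < s t by apply: lt_le_trans (s_ge1 t).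
exists (fun C t => lam C t / s t); first split.
- by move=> t; rewrite -mulr_suml -/(s t) mulfV ?gt_eqF.
- split=> [C CM t tC|C CM t]; first by rewrite lam_0 ?mul0r.
  by rewrite divr_ge0 ?lam_ge0 ?(ltW (s_gt0 t)).
rewrite /ub_objective big_seq [X in _ <= X]big_seq; apply: ler_sum => C CM.
apply/ler_wsqrtr/ler_sum => t _.
rewrite ler_sqr ?nnegrE ?divr_ge0 ?lam_ge0 ?(ltW (s_gt0 t)) //.
by rewrite ler_pdivrMr // ler_peMr ?lam_ge0 ?s_ge1.
Qed.

Lemma ub_feasible_exists : exists lam, ub_feasible S lam.
Proof.
have [lam /ub_feasible_of_covers [lam' lam'_feas _]] := covers_exists (const_mx 1).
by exists lam'.
Qed.

Lemma UB_le_cover_value1 : UB R S <= cover_value (const_mx 1).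
Proof.
apply: cover_value_ge => lam /ub_feasible_of_covers [lam' lam'_feas le_lam'].
apply: le_trans le_lam'; apply: ge_inf; last by exists lam'.
by exists 0 => _ [lam'' [_ ->]]; apply: ub_objective_ge0.
Qed.

Lemma dual_value_le_UB : dual_value R S <= UB R S.
Proof.
have [lam lam_feas] := ub_feasible_exists.
apply: ge_sup => [|_ [mu [mu_feas ->]]].
  exists 0, (fun=> 0); split; last by rewrite /dual_objective big1.
  by split=> // C _; rewrite big1 // => t _; rewrite expr0n.
apply: lb_le_inf => [|_ [lam' [lam'_feas ->]]]; first by exists (ub_objective S lam), lam.
exact: dual_objective_le.
Qed.

Lemma subgradient_ge0 mu :
  (forall x, \sum_i mu i * x 0 i <= cover_value x) -> forall t, 0 <= mu t.
Proof.
move=> mu_le t; pose x : 'rV[R]_T := \row_i (- (i == t)%:R).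
have := mu_le x; rewrite cover_value_nonpos => [|i]; last by rewrite mxE oppr_le0.
rewrite (bigD1 t) //= big1 => [|i /negbTE it]; last by rewrite mxE it oppr0 mulr0.
by rewrite mxE eqxx addr0 mulrN1 oppr_le0.
Qed.

Lemma subgradient_dual_feasible mu :
  (forall x, \sum_i mu i * x 0 i <= cover_value x) -> dual_feasible S mu.
Proof.
move=> mu_le; have mu_ge0 := subgradient_ge0 mu_le; split=> // C CM.
pose x : 'rV[R]_T := \row_i (if i \in C then mu i else 0).
have x_C t : t \in C -> x 0 t = mu t by rewrite mxE => ->.
have x_0 t : t \notin C -> x 0 t = 0 by rewrite mxE => /negbTE ->.
have x_ge0 t : 0 <= x 0 t by rewrite mxE; case: ifP.
have sum_x : \sum_(t <- C) mu t ^+ 2 = \sum_(t <- C) x 0 t ^+ 2.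
  by rewrite !big_seq; apply: eq_bigr => t tC; rewrite x_C.
apply: le_sqrtr_le1; first exact: sum_sqr_ge0.
rewrite sum_x; apply: le_trans (cover_value_le_order CM x_0 x_ge0).
apply: le_trans (mu_le x).
rewrite (sumr_uniq_support (max_order_uniq S_wf CM)) => [|t tC]; last first.
  by rewrite x_0 ?mulr0.
by rewrite !big_seq; apply: ler_sum => t tC; rewrite x_C // expr2.
Qed.

Lemma UB_le_dual_value : UB R S <= dual_value R S.
Proof.
have [mu [mu_le mu_1]] := sublinear_subgradient (const_mx 1) cover_value_sublinear.
have mu_feas := subgradient_dual_feasible mu_le.
apply: le_trans UB_le_cover_value1 _; rewrite -mu_1.
have -> : \sum_i mu i * (const_mx 1 : 'rV[R]_T) 0 i = dual_objective mu.
  by rewrite /dual_objective; apply: eq_bigr => i _; rewrite mxE mulr1.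
apply: ub_le_sup; last by exists mu.
have [lam lam_feas] := ub_feasible_exists.
by exists (ub_objective S lam) => _ [mu' [mu'_feas ->]]; apply: dual_objective_le.
Qed.

End Duality.

Theorem theorem2 (R : realType) (T : nat) (S : 'I_T -> {set 'I_T}) :
  tfg_wf S -> dual_value R S = UB R S.
Proof.
move=> S_wf; apply/le_anti/andP; split.
- exact: dual_value_le_UB.
- exact: UB_le_dual_value.
Qed.
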